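(* There is an absolute constant $c>0$ such that the following holds. Let $\epsilon\in(0,1)$ and let $A\in\mathbb{R}^{n\times n}$ be symmetric PSD with $\max_{i,j}|A_{ij}|\le1$ and largest eigenvalue $\lambda_1$. Include each index $i\in[n]$ independently with probability $p=\min(1,\frac{c}{\epsilon n})$ and let $T$ be the set of included indices. Then with probability at least $2/3$, either $\lambda_1 < \epsilon n$, or there exists $x \in \mathrm{span}\{e_i : i\in T\}$ with $x^TAx>0$ and $$\frac{x^TA^2x}{x^TAx}\ge \lambda_1-\epsilon n.$$ *)

From HB Require Import structures.
From mathcomp Require Import all_boot all_order all_algebra.
From mathcomp Require Import boolp.
From mathcomp Require Import Rstruct.
From Stdlib Require Import Rdefinitions.
Set Implicit Arguments. Unset Strict Implicit. Unset Printing Implicit Defensive.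
Import Order.TTheory GRing.Theory Num.Theory.
Local Open Scope ring_scope.

Definition qform (n : nat) (B : 'M[R]_n) (x : 'cV[R]_n) : R := (x^T *m B *m x) 0 0.

Definition symmetric_mx (n : nat) (A : 'M[R]_n) : Prop := A^T = A.

Definition psd_mx (n : nat) (A : 'M[R]_n) : Prop :=
  forall x : 'cV[R]_n, 0 <= qform A x.

Definition largest_eigenvalue (n : nat) (A : 'M[R]_n) (lam : R) : Prop :=
  eigenvalue A lam /\ forall mu : R, eigenvalue A mu -> mu <= lam.

Definition supported_on (n : nat) (T : {set 'I_n}) (x : 'cV[R]_n) : Prop :=
  forall i : 'I_n, i \notin T -> x i 0 = 0.

(* probability of the event E when each index of [n] is included
   independently with probability p, T = set of included indices *)
Definition bernoulli_prob (n : nat) (p : R) (E : {set 'I_n} -> Prop) : R :=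
  \sum_(T : {set 'I_n} | `[< E T >]) (p ^+ #|T| * (1 - p) ^+ (n - #|T|)).

(* Let v be a unit eigenvector for lam, x_T the restriction of v to T and
   s = |x_T|^2 = <x_T, v>.  As A is PSD, x_T^T A x_T >= lam s^2 and
   x_T^T A^2 x_T >= lam^2 s^2, so whenever s > 0 and the excess
   x_T^T A x_T - lam s^2 is at most eps n s^2, the Rayleigh-type ratio is at
   least lam^2 / (lam + eps n) >= lam - eps n.  Failure forces either
   s <= p/2 or excess > eps n (p/2)^2, so it is dominated by
   ((s - p)^2 + excess / (eps n)) / (p/2)^2.  Only first and second moments of
   the inclusion indicators enter its expectation, which equals
   4 (1 - p) / (p eps n) * (sum_i A_ii v_i^2 - (lam - eps n) sum_i v_i^4)
   <= 4 (1 - p) / (p eps n) <= 1/3 for c = 12; Markov's inequality concludes. *)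

From HB Require Import structures.
From mathcomp Require Import all_boot all_order all_algebra.
From mathcomp Require Import boolp.
From mathcomp Require Import Rstruct.
From Stdlib Require Import Rdefinitions.
From mathcomp Require Import ring lra.
Import Order.TTheory GRing.Theory Num.Theory.
Local Open Scope ring_scope.
Set Implicit Arguments. Unset Strict Implicit. Unset Printing Implicit Defensive.

Section BernoulliSubset.
Variables (n : nat) (p : R).
Implicit Types (T : {set 'I_n}) (F G : {set 'I_n} -> R).

Definition bernoulli_wt T := p ^+ #|T| * (1 - p) ^+ (n - #|T|).

Definition bernoulli_exp F := \sum_T bernoulli_wt T * F T.

Lemma bernoulli_wtE T : bernoulli_wt T = \prod_i (if i \in T then p else 1 - p).
Proof.
rewrite (bigID (mem T)) /= (eq_bigr (fun _ => p)) => [|i ->//].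
rewrite [X in _ * X](eq_bigr (fun _ => 1 - p)) => [|i /negbTE ->//].
rewrite !prodr_const; congr (_ * _ ^+ _).
by have := cardC (mem T); rewrite card_ord => E; rewrite -{1}E addKn.
Qed.

Lemma bernoulli_wt_ge0 T : 0 <= p -> p <= 1 -> 0 <= bernoulli_wt T.
Proof. by move=> p0 p1; rewrite mulr_ge0 // exprn_ge0 // subr_ge0. Qed.

Lemma bernoulli_exp_prod (g : 'I_n -> bool -> R) :
  bernoulli_exp (fun T => \prod_i g i (i \in T)) =
  \prod_i (p * g i true + (1 - p) * g i false).
Proof.
rewrite bigA_distr; apply: eq_bigr => T _; rewrite bernoulli_wtE -big_split.
by apply: eq_bigr => i _; case: (i \in T).
Qed.

Lemma bernoulli_exp_ext {F G} : F =1 G -> bernoulli_exp F = bernoulli_exp G.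
Proof. by move=> FG; apply: eq_bigr => T _; rewrite FG. Qed.

Lemma bernoulli_expD F G :
  bernoulli_exp (fun T => F T + G T) = bernoulli_exp F + bernoulli_exp G.
Proof. by rewrite -big_split; apply: eq_bigr => T _; rewrite mulrDr. Qed.

Lemma bernoulli_expZr a F : bernoulli_exp (fun T => F T * a) = bernoulli_exp F * a.
Proof. by rewrite mulr_suml; apply: eq_bigr => T _; rewrite mulrA. Qed.

Lemma bernoulli_exp_sum (I : eqType) (r : seq I) (F : I -> {set 'I_n} -> R) :
  bernoulli_exp (fun T => \sum_(i <- r) F i T) = \sum_(i <- r) bernoulli_exp (F i).
Proof.
rewrite exchange_big; apply: eq_bigr => T _; exact: mulr_sumr.
Qed.

Lemma bernoulli_wt_sum1 : \sum_T bernoulli_wt T = 1.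
Proof.
have := bernoulli_exp_prod (fun _ _ => 1).
rewrite [X in _ = X]big1 => [|i _]; last by rewrite !mulr1 subrKC.
by move=> <-; apply: eq_bigr => T _; rewrite big1 ?mulr1.
Qed.

Lemma bernoulli_exp_cst a : bernoulli_exp (fun _ => a) = a.
Proof. by rewrite /bernoulli_exp -mulr_suml bernoulli_wt_sum1 mul1r. Qed.

Lemma bernoulli_exp_mem i : bernoulli_exp (fun T => (i \in T)%:R) = p.
Proof.
have := bernoulli_exp_prod (fun k b => if k == i then b%:R else 1).
rewrite (eq_bigr (fun k => if k == i then p else 1)) => [|k _]; last first.
  by case: (k == i); rewrite ?mulr1 ?mulr0 ?addr0 ?subrKC.
rewrite -big_mkcond big_pred1_eq => <-; apply: bernoulli_exp_ext => T.
by rewrite -big_mkcond big_pred1_eq.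
Qed.

Lemma bernoulli_exp_mem2 i j :
  bernoulli_exp (fun T => (i \in T)%:R * (j \in T)%:R) =
  p ^+ 2 + (i == j)%:R * (p - p ^+ 2).
Proof.
have [<-|neq] := eqVneq i j.
  rewrite mul1r subrKC -(bernoulli_exp_mem i); apply: bernoulli_exp_ext => T.
  by rewrite -natrM mulnb andbb.
rewrite mul0r addr0.
have := bernoulli_exp_prod (fun k b =>
  (if k == i then b%:R else 1) * (if k == j then b%:R else 1)).
rewrite (bigD1 i) //= (bigD1 j) /=; last by rewrite eq_sym neq.
rewrite eqxx (negbTE neq) eq_sym (negbTE neq) eqxx.
rewrite big1 => [|k /andP[/negbTE -> /negbTE ->]].
  rewrite !mulr1 !mul1r !mulr0 !addr0 expr2 => <-; apply: bernoulli_exp_ext => T.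
  by rewrite big_split /= -!big_mkcond !big_pred1_eq.
by rewrite !mulr1 subrKC.
Qed.

Lemma bernoulli_exp_quad (K : 'I_n -> 'I_n -> R) :
  bernoulli_exp (fun T => \sum_i \sum_j (i \in T)%:R * (j \in T)%:R * K i j) =
  p ^+ 2 * \sum_i \sum_j K i j + (p - p ^+ 2) * \sum_i K i i.
Proof.
rewrite bernoulli_exp_sum; under eq_bigr do rewrite bernoulli_exp_sum.
under eq_bigr do under eq_bigr do rewrite bernoulli_expZr bernoulli_exp_mem2 mulrDl.
rewrite !mulr_sumr -big_split; apply: eq_bigr => i _ /=.
rewrite big_split /= -mulr_sumr; congr (_ + _).
rewrite (bigD1 i) //= eqxx mul1r big1 ?addr0 // => j.
by rewrite eq_sym => /negbTE ->; rewrite !mul0r.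
Qed.

Lemma bernoulli_prob_markov (P : {set 'I_n} -> Prop) F :
  0 <= p -> p <= 1 -> (forall T, 0 <= F T) -> (forall T, ~ P T -> 1 <= F T) ->
  1 - bernoulli_exp F <= bernoulli_prob p P.
Proof.
move=> p0 p1 F_ge0 F_ge1; rewrite lerBlDr -bernoulli_wt_sum1.
rewrite (bigID (fun T => `[< P T >])) lerD2l /bernoulli_exp.
rewrite [leRHS](bigID (fun T => `[< P T >])) /=.
rewrite -[leLHS]add0r; apply: lerD.
  by apply: sumr_ge0 => T _; rewrite mulr_ge0 ?bernoulli_wt_ge0.
apply: ler_sum => T /asboolPn notPT.
by rewrite -{1}[bernoulli_wt T]mulr1 ler_wpM2l ?bernoulli_wt_ge0 ?F_ge1.
Qed.

End BernoulliSubset.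

Section QuadraticForms.
Variable n : nat.
Implicit Types (M : 'M[R]_n) (x y v : 'cV[R]_n).

Definition vdot x y : R := (x^T *m y) 0 0.

Definition bform M x y : R := (x^T *m M *m y) 0 0.

Lemma vdotE x y : vdot x y = \sum_i x i 0 * y i 0.
Proof. by rewrite /vdot mxE; apply: eq_bigr => i _; rewrite mxE. Qed.

Lemma vdot_ge0 x : 0 <= vdot x x.
Proof. by rewrite vdotE sumr_ge0 // => i _; rewrite -expr2 sqr_ge0. Qed.

Lemma vdot_gt0 x : x != 0 -> 0 < vdot x x.
Proof.
move=> x_neq0; rewrite lt_def vdot_ge0 andbT; apply: contra x_neq0 => /eqP.
rewrite vdotE; under eq_bigr do rewrite -expr2.
move=> /(psumr_eq0P (fun i _ => sqr_ge0 (x i 0))) x0.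
by apply/eqP/matrixP => i j; rewrite ord1 mxE; apply/eqP; rewrite -sqrf_eq0 x0.
Qed.

Lemma bformE M x y : bform M x y = \sum_i \sum_j x i 0 * M i j * y j 0.
Proof.
rewrite /bform mxE exchange_big /=; apply: eq_bigr => j _.
by rewrite mxE mulr_suml; apply: eq_bigr => i _; rewrite mxE.
Qed.

Lemma bformC M x y : M^T = M -> bform M x y = bform M y x.
Proof.
move=> sM; rewrite /bform; transitivity ((x^T *m M *m y)^T 0 0); first by rewrite [RHS]mxE.
by rewrite !trmx_mul trmxK sM mulmxA.
Qed.

Lemma bform_eigenvector M mu x v : M *m v = mu *: v -> bform M x v = mu * vdot x v.
Proof. by move=> Mv; rewrite /bform -mulmxA Mv -scalemxAr mxE. Qed.

Lemma qform_subZ M x v a :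
  qform M (x - a *: v) = qform M x - a * (bform M x v + bform M v x) + a ^+ 2 * bform M v v.
Proof.
rewrite /qform /bform [(_ - _)^T]linearB linearZ /= !mulmxBl !mulmxBr.
rewrite -!scalemxAl -!scalemxAr.
move: (x^T *m M *m x) (x^T *m M *m v) (v^T *m M *m x) (v^T *m M *m v) => B1 B2 B3 B4.
by rewrite !mxE; ring.
Qed.

Lemma qform_ge_eigenvector M mu v x :
  M^T = M -> psd_mx M -> M *m v = mu *: v -> vdot v v = 1 ->
  mu * vdot x v ^+ 2 <= qform M x.
Proof.
move=> sM pM Mv v1; have := pM (x - vdot x v *: v).
rewrite qform_subZ (bformC v x sM) !(bform_eigenvector _ Mv) v1; nra.
Qed.

Lemma psd_mulmx_sym M : M^T = M -> psd_mx (M *m M).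
Proof.
move=> sM x; rewrite /qform mulmxA -(mulmxA (x^T *m M)) -{1}sM -trmx_mul.
exact: vdot_ge0.
Qed.

(* [eigenvalue] is defined through row eigenvectors; symmetry transposes them. *)
Lemma sym_eigenvalue_unit_vector M mu : M^T = M -> eigenvalue M mu ->
  exists2 v, M *m v = mu *: v & vdot v v = 1.
Proof.
move=> sM /eigenvalueP[w wM w_neq0]; set u := w^T.
have Mu : M *m u = mu *: u by rewrite -[M]sM -trmx_mul wM linearZ.
have u_gt0 : 0 < vdot u u by rewrite vdot_gt0 // trmx_eq0.
exists ((Num.sqrt (vdot u u))^-1 *: u); first by rewrite -scalemxAr Mu !scalerA mulrC.
rewrite /vdot linearZ /= [(_ *: u)^T]linearZ /= -scalemxAl scalerA mxE -/(vdot u u).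
by rewrite -expr2 exprVn sqr_sqrtr ?mulVf ?ltW ?gt_eqF.
Qed.

Lemma unit_vector_dim_gt0 x : vdot x x = 1 -> (0 < n)%nat.
Proof.
rewrite lt0n vdotE; apply: contra_eqN => /eqP n0.
by rewrite big1 1?eq_sym ?oner_neq0 // => i; have := ltn_ord i; rewrite {2}n0.
Qed.

Definition restrict (T : {set 'I_n}) x : 'cV[R]_n := \col_i ((i \in T)%:R * x i 0).

Lemma supported_on_restrict T x : supported_on T (restrict T x).
Proof. by move=> i /negbTE iT; rewrite mxE iT mul0r. Qed.

Lemma vdot_restrict T x y : vdot (restrict T x) y = \sum_i (i \in T)%:R * (x i 0 * y i 0).
Proof. by rewrite vdotE; apply: eq_bigr => i _; rewrite mxE mulrA. Qed.

Lemma qform_restrict M T x : qform M (restrict T x) =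
  \sum_i \sum_j (i \in T)%:R * (j \in T)%:R * (x i 0 * M i j * x j 0).
Proof.
rewrite -[qform _ _]/(bform _ _ _) bformE; apply: eq_bigr => i _.
by apply: eq_bigr => j _; rewrite !mxE; ring.
Qed.

End QuadraticForms.

Section Inequalities.
Variable F : realFieldType.
Implicit Types (lam k p s t g q Q : F).

Lemma ratio_ge_sub lam k t q Q :
  0 < t -> 0 < k -> k <= lam -> lam * t <= q -> q - lam * t <= k * t ->
  lam ^+ 2 * t <= Q -> 0 < q /\ lam - k <= Q / q.
Proof.
move=> t_gt0 k_gt0 k_le_lam q_ge q_le Q_ge.
have q_gt0 : 0 < q by nra.
by split=> //; rewrite ler_pdivlMr //; nra.
Qed.

Lemma deviation_or_excess p k s g :
  0 < p -> 0 < k -> 0 <= s -> 0 <= g -> ~ (0 < s /\ g <= k * s ^+ 2) ->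
  1 <= ((s - p) ^+ 2 + g / k) / (p / 2) ^+ 2.
Proof.
move=> p_gt0 k_gt0 s_ge0 g_ge0 fail.
rewrite ler_pdivlMr ?exprn_gt0 ?divr_gt0 // mul1r.
have gk_ge0 : 0 <= g / k by rewrite divr_ge0 // ltW.
have [s_small | s_large] := lerP s (p / 2).
  have : (p / 2) ^+ 2 <= (s - p) ^+ 2.
    by rewrite -[(s - p) ^+ 2]sqrrN opprB ler_pXn2r ?nnegrE //; lra.
  lra.
have g_gt : k * s ^+ 2 < g by rewrite ltNge; apply/negP => g_le; apply: fail; split; lra.
have : s ^+ 2 <= g / k by rewrite ler_pdivlMr // mulrC ltW.
have : (p / 2) ^+ 2 <= s ^+ 2 by rewrite ler_pXn2r ?nnegrE //; lra.
move: (sqr_ge0 (s - p)); lra.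
Qed.

End Inequalities.

Section SampledTopEigenvector.
Variables (n : nat) (A : 'M[R]_n) (lam : R) (v : 'cV[R]_n).
Hypotheses (A_sym : A^T = A) (A_psd : psd_mx A)
  (Av : A *m v = lam *: v) (v_unit : vdot v v = 1).

Definition mass_on (T : {set 'I_n}) : R := vdot (restrict T v) v.

Definition excess_on (T : {set 'I_n}) :=
  qform A (restrict T v) - lam * mass_on T ^+ 2.

Lemma mass_on_ge0 T : 0 <= mass_on T.
Proof.
rewrite /mass_on vdot_restrict sumr_ge0 // => i _.
by rewrite mulr_ge0 ?ler0n // -expr2 sqr_ge0.
Qed.

Lemma excess_on_ge0 T : 0 <= excess_on T.
Proof. by rewrite subr_ge0 (qform_ge_eigenvector (restrict T v) A_sym A_psd Av v_unit). Qed.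

Lemma restrict_witness k T : 0 < k -> k <= lam ->
  0 < mass_on T -> excess_on T <= k * mass_on T ^+ 2 ->
  exists x, supported_on T x /\ 0 < qform A x /\ lam - k <= qform (A *m A) x / qform A x.
Proof.
move=> k_gt0 k_le_lam mass_gt0 excess_le; exists (restrict T v).
split; first exact: supported_on_restrict.
have AAv : A *m A *m v = lam ^+ 2 *: v by rewrite -mulmxA Av -scalemxAr Av scalerA.
apply: (ratio_ge_sub (t := mass_on T ^+ 2)) => //; first by rewrite exprn_gt0.
- exact: (qform_ge_eigenvector (restrict T v) A_sym A_psd Av v_unit).
- apply: (qform_ge_eigenvector (restrict T v) _ (psd_mulmx_sym A_sym) AAv v_unit).
  by rewrite trmx_mul A_sym.
Qed.

Lemma sum_sqr_unit : \sum_i v i 0 ^+ 2 = 1.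
Proof. by rewrite -v_unit vdotE; apply: eq_bigr => i _; rewrite expr2. Qed.

Lemma exp_mass_on p : bernoulli_exp p mass_on = p.
Proof.
rewrite (bernoulli_exp_ext _ (fun T => vdot_restrict T v v)) bernoulli_exp_sum.
under eq_bigr do rewrite bernoulli_expZr bernoulli_exp_mem.
by rewrite -mulr_sumr -(eq_bigr _ (fun i _ => expr2 (v i 0))) sum_sqr_unit mulr1.
Qed.

Lemma exp_mass_on_sqr p :
  bernoulli_exp p (fun T => mass_on T ^+ 2) = p ^+ 2 + (p - p ^+ 2) * \sum_i v i 0 ^+ 4.
Proof.
have mass_sqr T : mass_on T ^+ 2 =
    \sum_i \sum_j (i \in T)%:R * (j \in T)%:R * (v i 0 ^+ 2 * v j 0 ^+ 2).
  rewrite /mass_on vdot_restrict expr2 big_distrlr /=.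
  by apply: eq_bigr => i _; apply: eq_bigr => j _; ring.
rewrite (bernoulli_exp_ext _ mass_sqr) bernoulli_exp_quad -big_distrlr /= sum_sqr_unit.
by under [in RHS]eq_bigr do rewrite (exprD _ 2 2); ring.
Qed.

Lemma exp_mass_on_dev p :
  bernoulli_exp p (fun T => (mass_on T - p) ^+ 2) = (p - p ^+ 2) * \sum_i v i 0 ^+ 4.
Proof.
rewrite (bernoulli_exp_ext _ (G := fun T =>
  mass_on T ^+ 2 + (mass_on T * (- 2 * p) + p ^+ 2))); last by move=> T; ring.
rewrite !bernoulli_expD bernoulli_expZr bernoulli_exp_cst exp_mass_on exp_mass_on_sqr; ring.
Qed.

Lemma exp_excess_on p : bernoulli_exp p excess_on =
  (p - p ^+ 2) * (\sum_i A i i * v i 0 ^+ 2 - lam * \sum_i v i 0 ^+ 4).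
Proof.
rewrite (bernoulli_exp_ext _ (G := fun T =>
  qform A (restrict T v) + mass_on T ^+ 2 * - lam)); last by move=> T; rewrite /excess_on; ring.
rewrite bernoulli_expD bernoulli_expZr exp_mass_on_sqr.
rewrite (bernoulli_exp_ext _ (fun T => qform_restrict A T v)) bernoulli_exp_quad -bformE.
rewrite (bform_eigenvector _ Av) v_unit mulr1.
rewrite (eq_bigr (fun i => A i i * v i 0 ^+ 2)) => [|i _]; last by rewrite expr2; ring.
ring.
Qed.

Definition failure_weight p k T :=
  ((mass_on T - p) ^+ 2 + excess_on T / k) / (p / 2) ^+ 2.

Lemma exp_failure_weight p k : 0 < p -> p <= 1 -> 0 < k -> k <= lam ->
  (forall i, A i i <= 1) -> bernoulli_exp p (failure_weight p k) * (p * k) <= 4 * (1 - p).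
Proof.
move=> p_gt0 p_le1 k_gt0 k_le_lam A_diag_le1.
rewrite (bernoulli_exp_ext _ (G := fun T =>
  (mass_on T - p) ^+ 2 * (4 / p ^+ 2) + excess_on T * (4 / (p ^+ 2 * k)))); last first.
  by move=> T; rewrite /failure_weight; field; rewrite ?gt_eqF.
rewrite bernoulli_expD !bernoulli_expZr exp_mass_on_dev exp_excess_on.
set D := \sum_i A i i * _; set S4 := \sum_i v i 0 ^+ 4.
have D_le1 : D <= 1.
  by rewrite -sum_sqr_unit ler_sum // => i _; rewrite ler_piMl ?sqr_ge0.
have S4_ge0 : 0 <= S4.
  by rewrite sumr_ge0 // => i _; rewrite (exprM _ 2 2) exprn_ge0 ?sqr_ge0.
have -> : ((p - p ^+ 2) * S4 * (4 / p ^+ 2) +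
           (p - p ^+ 2) * (D - lam * S4) * (4 / (p ^+ 2 * k))) * (p * k) =
          4 * (1 - p) * (D + (k - lam) * S4).
  by field; rewrite !gt_eqF.
rewrite ler_piMr ?mulr_ge0 ?subr_ge0 //; nra.
Qed.

Lemma failure_weight_ge0 p k T : 0 < p -> 0 < k -> 0 <= failure_weight p k T.
Proof.
move=> p_gt0 k_gt0.
by rewrite divr_ge0 ?sqr_ge0 // addr_ge0 ?sqr_ge0 // divr_ge0 ?excess_on_ge0 ?ltW.
Qed.

Lemma failure_weight_ge1 p k T : 0 < p -> 0 < k -> k <= lam ->
  ~ (exists x, supported_on T x /\ 0 < qform A x /\ lam - k <= qform (A *m A) x / qform A x) ->
  1 <= failure_weight p k T.
Proof.
move=> p_gt0 k_gt0 k_le_lam no_witness.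
apply: deviation_or_excess => //; [exact: mass_on_ge0 | exact: excess_on_ge0 |].
by move=> [mass_gt0 excess_le]; apply: no_witness; apply: restrict_witness.
Qed.

End SampledTopEigenvector.

Theorem mainTheorem5 :
  exists c : R, 0 < c /\
  forall (n : nat) (eps : R) (A : 'M[R]_n) (lam1 : R),
    0 < eps -> eps < 1 ->
    symmetric_mx A -> psd_mx A ->
    (forall i j, `|A i j| <= 1) ->
    largest_eigenvalue A lam1 ->
    let p := Num.min 1 (c / (eps * n%:R)) in
    2 / 3 <= bernoulli_prob p (fun T =>
      lam1 < eps * n%:R \/
      exists x : 'cV[R]_n, supported_on T x /\ 0 < qform A x /\
        qform (A *m A) x / qform A x >= lam1 - eps * n%:R).
Proof.
exists 12; split=> [|n eps A lam e_gt0 _ A_sym A_psd A_le1 [lam_eig _]]; first lra.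
cbv zeta; set K := eps * n%:R; set p := Num.min 1 _.
have p_ge0 : 0 <= p by rewrite le_min ler01 divr_ge0 ?mulr_ge0 ?ler0n ?ltW.
have p_le1 : p <= 1 by rewrite ge_min lexx.
have [v Av v_unit] := sym_eigenvalue_unit_vector A_sym lam_eig.
have [lam_small | K_le_lam] := ltP lam K.
  apply: le_trans (bernoulli_prob_markov (F := fun _ => 0) p_ge0 p_le1 (fun _ => lexx 0) _).
    by rewrite bernoulli_exp_cst; lra.
  by move=> T []; left.
have K_gt0 : 0 < K by rewrite mulr_gt0 // ltr0n (unit_vector_dim_gt0 v_unit).
have p_gt0 : 0 < p by rewrite lt_min ltr01 divr_gt0.
have pK_ge : 12 * (1 - p) <= p * K.
  rewrite /p minEle; case: ifP => _; first by rewrite subrr mulr0 mul1r ltW.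
  have : 0 < 12 / K by rewrite divr_gt0.
  by rewrite divfK ?gt_eqF //; lra.
have exp_le := exp_failure_weight Av v_unit p_gt0 p_le1 K_gt0 K_le_lam
  (fun i => le_trans (ler_norm _) (A_le1 i i)).
apply: le_trans (bernoulli_prob_markov p_ge0 p_le1
  (fun T => failure_weight_ge0 A_sym A_psd Av v_unit T p_gt0 K_gt0) _).
  have pK_gt0 : 0 < p * K by rewrite mulr_gt0.
  nra.
move=> T no_event; apply: (failure_weight_ge1 A_sym A_psd Av v_unit) => // witness.
by apply: no_event; right.
Qed.
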